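(* Let $b$ be an integer with $2\le b\le 10$. All solutions of $$P_n=b^{d}P_m+Q_k$$ in integers $n,k\ge 0$ and $m\ge 1$, where $d$ is the number of digits of $Q_k$ in base $b$, are given by the following representations (in particular $P_n\in\{5,12,70\}$): $$5=P_3=3^1P_1+Q_0=3^1P_1+Q_1,$$ $$12=P_4=5^1P_2+Q_0=5^1P_2+Q_1,$$ $$12=P_4=10^1P_1+Q_0=10^1P_1+Q_1,$$ $$70=P_6=6^2P_1+Q_4.$$
   Context: $(P_n)_{n\ge0}$ is the Pell sequence: $P_0=0$, $P_1=1$, $P_n=2P_{n-1}+P_{n-2}$ for $n\ge2$. $(Q_n)_{n\ge0}$ is the Pell–Lucas sequence: $Q_0=2$, $Q_1=2$, $Q_n=2Q_{n-1}+Q_{n-2}$ for $n\ge2$. For a positive integer $N$, the number of digits of $N$ in base $b$ is $\lfloor \log_b N\rfloor+1$. (For $m=0$ the equation reduces to $P_n=Q_k$, whose only solutions are $P_2=Q_0=Q_1$; these are excluded by the hypothesis $m\ge1$.) *)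

From mathcomp Require Import all_boot.
Set Implicit Arguments. Unset Strict Implicit. Unset Printing Implicit Defensive.

Fixpoint pell (n : nat) : nat :=
  match n with
  | 0 => 0
  | 1 => 1
  | (n'.+1 as m).+1 => 2 * pell m + pell n'
  end.

Fixpoint pell_lucas (n : nat) : nat :=
  match n with
  | 0 => 2
  | 1 => 2
  | (n'.+1 as m).+1 => 2 * pell_lucas m + pell_lucas n'
  end.

(* Number of base-b digits of a positive integer N: floor(log_b N) + 1.
   trunc_log b N is the largest e with b^e <= N (for b >= 2, N >= 1). *)
Definition ndigits (b N : nat) : nat := (trunc_log b N).+1.

From Stdlib Require Import NArith ZArith Lia.
From mathcomp Require Import all_boot zify.
Set Implicit Arguments. Unset Strict Implicit.

(* Put x = b^d, so that Q_k < x <= b Q_k <= 10 Q_k.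
   Part I (size): from 2 P_{m+k} = P_m Q_k + P_k Q_m and the growth
     2 P_i <= P_{i+1} <= 5/2 P_i, the equation forces n = m + k + j, j <= 4.
   Part II (divisibility): P_m divides P_n - Q_k.  By the addition formula
     and the Cassini and d'Ocagne identities, k may be reduced modulo m, and
     for m >= 8 the remaining residue is a small number which is not a
     multiple of P_m.  Hence m <= 7.
   Part III (finitely many cases m <= 7, j <= 4, 2 <= b <= 10): each case is
     settled by a certificate checked by evaluation, either a linear
     "window" inequality excluding every k >= 1, or a congruence modulo a
     modulus M excluding all large exponents d (using periodicity of Pell
     numbers and of powers of b modulo M); the finitely many pairs (k, d)
     left over are checked directly. *)

Definition pell_recurrence (u : nat -> nat) : Prop := forall n, u n.+2 = 2 * u n.+1 + u n.

Lemma pell_rec : pell_recurrence pell. Proof. by []. Qed.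
Lemma pell_lucas_rec : pell_recurrence pell_lucas. Proof. by []. Qed.

Lemma pell_shift u : pell_recurrence u ->
  forall a k, u (a.+1 + k) = pell a.+1 * u k.+1 + pell a * u k.
Proof.
move=> hu; elim=> [|a IH] k; first by rewrite /= add1n; lia.
rewrite addSnnS IH hu (pell_rec a); lia.
Qed.

Lemma pell_lucasE k : pell_lucas k + 2 * pell k = 2 * pell k.+1.
Proof.
elim/ltn_ind: k => -[|[|k]] // IH.
rewrite pell_lucas_rec !pell_rec.
have := IH k.+1 (ltnSn _); have := IH k (ltnW (ltnSn _)); rewrite pell_rec; lia.
Qed.

Lemma pell_lucas_succE n : pell_lucas n.+1 = pell n.+2 + pell n.
Proof. have := pell_lucasE n.+1; rewrite pell_rec; lia. Qed.

Lemma pell_SS_lucas n : pell n.+2 = pell_lucas n + 3 * pell n.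
Proof. have := pell_lucasE n; rewrite pell_rec; lia. Qed.

Lemma pell_double k : 2 * pell k <= pell k.+1.
Proof. by case: k => [|k] //; rewrite pell_rec; lia. Qed.

Lemma pell_succ_le k : 0 < k -> 2 * pell k.+1 <= 5 * pell k.
Proof. by case: k => [|k] // _; rewrite pell_rec; have := pell_double k; lia. Qed.

Lemma pell_mono i i' : i <= i' -> pell i <= pell i'.
Proof.
move=> /subnK <-; elim: (i' - i) => [|d IH] //.
by rewrite addSn; have := pell_double (d + i); lia.
Qed.

Lemma pell_gt0 i : 0 < i -> 0 < pell i.
Proof. exact: pell_mono. Qed.

Lemma pell_lucas_mono k k' : k <= k' -> pell_lucas k <= pell_lucas k'.
Proof.
move=> /subnK <-; elim: (k' - k) => [|d IH] //; rewrite addSn.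
have := pell_lucasE (d + k); have := pell_lucasE (d + k).+1.
have := pell_double (d + k).+1; have := pell_double (d + k); lia.
Qed.

Lemma pell_lucas_gt0 k : 0 < pell_lucas k.
Proof. exact: leq_trans (pell_lucas_mono (leq0n k)). Qed.

Lemma pell_addE m k : 2 * pell (m + k) = pell m * pell_lucas k + pell k * pell_lucas m.
Proof.
elim/ltn_ind: k => -[|[|k]] IH.
- by rewrite addn0 [pell 0]/= [pell_lucas 0]/=; lia.
- by rewrite addn1 [pell 1]/= [pell_lucas 1]/=; have := pell_lucasE m; lia.
rewrite !addnS pell_rec pell_lucas_rec pell_rec.
have := IH k.+1 (ltnSn _); have := IH k (ltnW (ltnSn _)); rewrite !addnS; nia.
Qed.

Lemma pell_exp2 i t : 2 ^ t * pell i <= pell (i + t).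
Proof.
elim: t => [|t IH]; first by rewrite addn0 mul1n.
by rewrite expnS addnS; have := pell_double (i + t); lia.
Qed.

(* For m >= 1 the product P_m Q_k lies between 4/5 P_{m+k} and 2 P_{m+k}:
   by the addition formula, since 2 P_k <= Q_k and Q_m <= 3 P_m. *)
Lemma pell_mul_lucas_bounds m k : 0 < m ->
  4 * pell (m + k) <= 5 * (pell m * pell_lucas k) <= 10 * pell (m + k).
Proof.
move=> hm; have hA := pell_addE m k.
have hQm : pell_lucas m <= 3 * pell m by have := pell_lucasE m; have := pell_succ_le hm; lia.
have hQk : 2 * pell k <= pell_lucas k by have := pell_lucasE k; have := pell_double k; lia.
have : pell k * pell_lucas m <= pell k * (3 * pell m) by apply: leq_mul.
have : (2 * pell k) * (3 * pell m) <= pell_lucas k * (3 * pell m) by apply: leq_mul.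
nia.
Qed.

Lemma index_window m k n x : 0 < m -> pell_lucas k < x <= 10 * pell_lucas k ->
  pell n = x * pell m + pell_lucas k -> m + k <= n <= m + k + 4.
Proof.
move=> hm /andP [hx1 hx2] E.
have /andP [hlo hhi] := pell_mul_lucas_bounds k hm.
have hxlo : (pell_lucas k).+1 * pell m <= x * pell m by apply: leq_mul.
have hxhi : x * pell m <= (10 * pell_lucas k) * pell m by apply: leq_mul.
have hQ : pell_lucas k <= pell m * pell_lucas k by rewrite leq_pmull ?pell_gt0.
apply/andP; split; rewrite leqNgt; apply/negP => hn.
- have hprev : pell n <= pell (m + k).-1 by apply: pell_mono; lia.
  have := pell_double (m + k).-1; rewrite prednK; last lia.
  have := pell_lucas_gt0 k; lia.
- have hnext : pell (m + k + 5) <= pell n by apply: pell_mono; lia.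
  have := pell_exp2 (m + k) 5; lia.
Qed.

(* Part II reasons with divisibility in Z, where P and Q are embedded. *)
Definition zpell (n : nat) : Z := Z.of_nat (pell n).
Definition zlucas (n : nat) : Z := Z.of_nat (pell_lucas n).

Definition sgn (n : nat) : Z := if odd n then (-1)%Z else 1%Z.

Lemma sgnS n : sgn n.+1 = (- sgn n)%Z.
Proof. by rewrite /sgn /=; case: (odd n). Qed.

Lemma sgn_cases n : sgn n = 1%Z \/ sgn n = (-1)%Z.
Proof. by rewrite /sgn; case: (odd n); auto. Qed.

Lemma dvd_between (n w q : Z) : (n | w)%Z -> ((q - 1) * n < w < (q + 1) * n)%Z -> w = (q * n)%Z.
Proof. by move=> [c ->] hw; have -> : c = q by nia. Qed.

Lemma pell_shift_mod u : pell_recurrence u -> forall a t,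
  (zpell a.+1 | Z.of_nat (u (a.+1 + t)%N) - zpell a * Z.of_nat (u t))%Z.
Proof.
move=> hu a t; exists (Z.of_nat (u t.+1)).
by rewrite (pell_shift hu) /zpell; lia.
Qed.

Lemma cassini a : (zpell a.+2 * zpell a - zpell a.+1 * zpell a.+1)%Z = sgn a.+1.
Proof.
elim: a => [|a IH]; first by rewrite /zpell /sgn.
by rewrite sgnS -IH /zpell (pell_rec a.+1) (pell_rec a); lia.
Qed.

Lemma pell_coprime a : Z.gcd (zpell a.+1) (zpell a) = 1%Z.
Proof.
apply: Z.bezout_1_gcd; exists (- sgn a.+1 * zpell a.+1)%Z, (sgn a.+1 * zpell a.+2)%Z.
have := cassini a; case: (sgn_cases a.+1) => ->; lia.
Qed.

Lemma docagne t u :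
  (zpell (t + u) * zpell t.+1 + sgn t.+1 * zpell u = zpell (t.+1 + u) * zpell t)%Z.
Proof.
case: t => [|t].
  rewrite add0n add1n; change (sgn 1) with (-1)%Z.
  by change (zpell 1) with 1%Z; change (zpell 0) with 0%Z; lia.
have e1 := pell_shift pell_rec t.+1 u; have e2 := pell_shift pell_rec t u.
by rewrite sgnS -(cassini t) /zpell e1 e2; lia.
Qed.

(* If P_m | P_{m+k+j} - Q_k, then the same holds with k replaced by k - m:
   both terms get multiplied by P_{m-1}, which is coprime to P_m. *)
Lemma dvd_pell_lucas_shift a j k :
  (zpell a.+1 | zpell (a.+1 + (a.+1 + k) + j) - zlucas (a.+1 + k))%Z ->
  (zpell a.+1 | zpell (a.+1 + k + j) - zlucas k)%Z.
Proof.
move=> h; apply: (Z.gauss _ (zpell a) _ _ (pell_coprime a)).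
have eP := pell_shift_mod pell_rec a (a.+1 + k + j).
have eQ := pell_shift_mod pell_lucas_rec a k.
rewrite -addnA in h.
have -> : (zpell a * (zpell (a.+1 + k + j) - zlucas k) =
  (zpell (a.+1 + (a.+1 + k + j)) - zlucas (a.+1 + k)) -
  (zpell (a.+1 + (a.+1 + k + j)) - zpell a * zpell (a.+1 + k + j)) +
  (zlucas (a.+1 + k) - zpell a * zlucas k))%Z by ring.
by apply: Z.divide_add_r; [apply: Z.divide_sub_r; [exact: h | exact: eP] | exact: eQ].
Qed.

Lemma dvd_pell_lucas_mod a j k :
  (zpell a.+1 | zpell (a.+1 + k + j) - zlucas k)%Z ->
  (zpell a.+1 | zpell (a.+1 + k %% a.+1 + j) - zlucas (k %% a.+1))%Z.
Proof.
rewrite {1 2}(divn_eq k a.+1); elim: (k %/ a.+1) => [|q IH]; first by rewrite mul0n add0n.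
move=> h; apply/IH/dvd_pell_lucas_shift.
by rewrite (addnA a.+1 (q * a.+1)) -mulSn.
Qed.

(* Modulo P_{a+1}, shifting by 2(a+1) multiplies by P_a^2 = -(-1)^a. *)
Lemma pell_shift2_mod a t : 0 < a ->
  (zpell a.+1 | zpell (a.+1 + (a.+1 + t)) + sgn a * zpell t)%Z.
Proof.
case: a => [|a] // _.
exists (zpell (a.+2 + t).+1 + zpell a.+1 * zpell t.+1 + zpell a * zpell t)%Z.
have E := cassini a.
rewrite /zpell (pell_shift pell_rec a.+1 (a.+2 + t)) (pell_shift pell_rec a.+1 t).
rewrite /zpell in E; rewrite -E; lia.
Qed.

Lemma pell_ltn i i' : 0 < i -> i < i' -> pell i < pell i'.
Proof.
move=> hi hii'; have := pell_double i; have := pell_gt0 hi.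
have := pell_mono hii'; lia.
Qed.

(* For r >= 1, Q_{r+1} = P_{r+2} + P_r lies strictly between P_{r+2} and P_{r+3}. *)
Lemma pell_lucas_between r : 0 < r -> pell r.+2 < pell_lucas r.+1 < pell r.+3.
Proof.
move=> hr; rewrite pell_lucas_succE (pell_rec r.+1).
have := pell_gt0 hr; have := pell_mono (leqnSn r); have := pell_gt0 (ltn0Sn r.+1).
by move: (pell r) (pell r.+1) (pell r.+2) => x y z *; apply/andP; split; lia.
Qed.

Lemma pell_eq2 i : pell i = 2 -> i = 2.
Proof.
case: i => [|[|[|i]]] // e.
by have := pell_mono (leq_addl i 3); rewrite addn3 e.
Qed.

Lemma pell_lucas_eq_pell r i : pell_lucas r = pell i -> r <= 1 /\ i = 2.
Proof.
case: r => [|[|r]] e; try by split=> //; apply: pell_eq2.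
have /andP [h1 h2] := pell_lucas_between (ltn0Sn r).
have [hi|hi] := leqP i r.+3; have := pell_mono hi; rewrite -e leqNgt.
  by rewrite h1.
by rewrite h2.
Qed.

Lemma pell_add_lucas_lt a r : 2 <= a -> 0 < r -> pell a + pell_lucas r < pell (a + r).
Proof.
case: a => [|a] // ha; case: r => [|r] // _.
rewrite pell_shift // pell_lucas_succE.
have h1 : 2 <= pell a.+1 by apply: (pell_mono (_ : 2 <= a.+1)).
have h2 : 2 <= pell r.+2 by apply: (pell_mono (_ : 2 <= r.+2)).
have h3 : 1 <= pell a by apply: pell_gt0; lia.
have h4 : pell r < pell r.+1 by case: r {h2} => [|r] //; apply: pell_ltn.
have h5 : pell r.+1 <= pell a * pell r.+1 by rewrite leq_pmull.
nia.
Qed.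

(* Modulo P_m with m = a+2 and 1 <= s <= a+1, the shift formula and
   d'Ocagne's identity give P_{m+s} = P_{m-1} P_s = -(-1)^s P_{m-s}. *)
Lemma pell_shift_docagne_mod a s x : 0 < s <= a.+1 ->
  (zpell a.+2 | zpell (a.+2 + s) - x)%Z -> (zpell a.+2 | sgn s * zpell (a.+2 - s) + x)%Z.
Proof.
case: s => [|t] // /andP [_ hs] H.
have H1 := Z.divide_sub_r _ _ _ H (pell_shift_mod pell_rec a.+1 t.+1).
have := Z.divide_sub_r _ _ _ (Z.divide_factor_l (zpell a.+2) (zpell t)) H1.
have e1 : t + (a.+2 - t.+1) = a.+1 by lia.
have e2 : t.+1 + (a.+2 - t.+1) = a.+2 by lia.
have := docagne t (a.+2 - t.+1); rewrite e1 e2 => <-.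
by rewrite /zpell; congr Z.divide; ring.
Qed.

(* Part II, first case: for m = a+2 >= 8 and r + j < m, j <= 4, the residue
   P_{m+r+j} - Q_r is not divisible by P_m: modulo P_m it equals
   -((-1)^s P_{m-s} + Q_r) with s = r + j, a number strictly between -P_m
   and 2 P_m which is neither 0 nor P_m. *)
Lemma residue_short a r j : 6 <= a -> r + j <= a.+1 -> j <= 4 ->
  ~ (zpell a.+2 | zpell (a.+2 + r + j) - zlucas r)%Z.
Proof.
move=> ha hs hj H; rewrite -addnA in H.
have hPa : 70 <= pell a by apply: (pell_mono ha).
have hm : pell a.+2 = 2 * pell a.+1 + pell a by [].
have hQ := pell_lucas_gt0 r.
case: (posnP (r + j)) => hs0.
  have hr : r = 0 by lia.
  move: H; rewrite hs0 hr addn0 => /(dvd_between (q := 0%Z)); rewrite /zpell /zlucas.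
  change (pell_lucas 0) with 2; lia.
have H2 := pell_shift_docagne_mod (introT andP (conj hs0 hs)) H.
set u := a.+2 - (r + j) in H2.
have hu : 1 <= u <= a.+1 by rewrite /u; lia.
have hPu : pell u <= pell a.+1 by apply: pell_mono; lia.
case: (leqP r a) => hr.
- have hQr : pell_lucas r <= pell_lucas a by apply: pell_lucas_mono.
  have hma := pell_SS_lucas a.
  case: (sgn_cases (r + j)) => hsg; rewrite hsg in H2.
  + have := dvd_between (q := 1%Z) H2; rewrite /zpell /zlucas => hw.
    have {}hw : pell u + pell_lucas r = pell a.+2 by lia.
    case: (posnP r) => hr0; first by rewrite hr0 in hw; change (pell_lucas 0) with 2 in hw; lia.
    have hlt : pell (a.+2 - r) + pell_lucas r < pell a.+2.
      by rewrite -{2}(subnK (_ : r <= a.+2)) ?pell_add_lucas_lt //; lia.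
    have : pell u <= pell (a.+2 - r) by apply: pell_mono; rewrite /u; lia.
    lia.
  + have := dvd_between (q := 0%Z) H2; rewrite /zpell /zlucas => hw.
    have e : pell_lucas r = pell u by lia.
    have [hr1 hu2] := pell_lucas_eq_pell e.
    rewrite /u in hu2; lia.
- have hr1 : r = a.+1 by lia.
  have hu1 : u = 1 by rewrite /u; lia.
  rewrite hr1 hu1 in H2.
  have := pell_lucas_succE a; have := pell_mono (leqnSn a).
  have := dvd_between (q := 1%Z) H2; rewrite /zpell /zlucas; change (pell 1) with 1.
  case: (sgn_cases (a.+1 + j)) => ->; lia.
Qed.

(* Part II, second case: for m = a+2 >= 8, r < m and m <= r + j with j <= 4.
   Writing r + j = m + s, modulo P_m the residue equals -((-1)^(m-1) P_s + Q_r)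
   (shift by 2m), a number strictly between 0 and P_m or between P_m and 2 P_m. *)
Lemma residue_long a r j : 6 <= a -> r <= a.+1 -> a.+2 <= r + j -> j <= 4 ->
  ~ (zpell a.+2 | zpell (a.+2 + r + j) - zlucas r)%Z.
Proof.
move=> ha hr hs hj H.
set s := r + j - a.+2.
have hs3 : s <= 3 by rewrite /s; lia.
have hPa : 70 <= pell a by apply: (pell_mono ha).
have hm : pell a.+2 = 2 * pell a.+1 + pell a by [].
have hPs : pell s <= 5 by apply: (pell_mono hs3).
have hQr : 34 <= pell_lucas r by apply: (pell_lucas_mono (_ : 4 <= r)); lia.
have H1 : (zpell a.+2 | sgn a.+1 * zpell s + zlucas r)%Z.
  have := Z.divide_sub_r _ _ _ (pell_shift2_mod s (ltn0Sn a)) H.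
  by rewrite -addnA (_ : r + j = a.+2 + s); [congr Z.divide; ring | rewrite /s; lia].
case: (leqP r a) => hra.
- have := pell_lucas_mono hra; have := pell_SS_lucas a.
  have := dvd_between (q := 0%Z) H1; rewrite /zpell /zlucas.
  case: (sgn_cases a.+1) => ->; lia.
- have hr1 : r = a.+1 by lia.
  have := pell_lucas_succE a; have := pell_mono (leqnSn a).
  have := dvd_between (q := 1%Z) H1; rewrite /zpell /zlucas hr1.
  case: (sgn_cases a.+1) => ->; lia.
Qed.

Lemma large_m_no_divisibility m k j : 8 <= m -> j <= 4 ->
  ~ (zpell m | zpell (m + k + j) - zlucas k)%Z.
Proof.
case: m => [|[|a]] // ha hj /dvd_pell_lucas_mod.
have hr : k %% a.+2 < a.+2 by rewrite ltn_mod.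
case: (leqP (k %% a.+2 + j) a.+1) => hs.
- by apply: residue_short => //; lia.
- by apply: residue_long => //; lia.
Qed.

(* Part III computes with binary naturals N, so that the finitely many
   remaining cases can be checked by evaluation.  Congruence modulo M on N: *)
Definition eqmod (M x y : N) : Prop := (x mod M = y mod M)%num.

Lemma eqmod_sym M x y : eqmod M x y -> eqmod M y x.
Proof. by rewrite /eqmod => ->. Qed.

Lemma eqmod_trans M x y z : eqmod M x y -> eqmod M y z -> eqmod M x z.
Proof. by rewrite /eqmod => -> ->. Qed.

Lemma eqmod_add M x x' y y' : eqmod M x x' -> eqmod M y y' -> eqmod M (x + y) (x' + y').
Proof. by rewrite /eqmod N.Div0.add_mod => -> ->; rewrite -N.Div0.add_mod. Qed.

Lemma eqmod_mul M x x' y y' : eqmod M x x' -> eqmod M y y' -> eqmod M (x * y) (x' * y').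
Proof. by rewrite /eqmod N.Div0.mul_mod => -> ->; rewrite -N.Div0.mul_mod. Qed.

Lemma eqmod_mod M x : eqmod M (x mod M) x.
Proof. by rewrite /eqmod N.Div0.mod_mod. Qed.

Lemma N_of_nat_exp b d : N.of_nat (b ^ d) = (N.of_nat b ^ N.of_nat d)%num.
Proof. by elim: d => [|d IH] //; rewrite expnS Nat2N.inj_mul IH Nat2N.inj_succ N.pow_succ_r'. Qed.

Definition pell_step (M : N) (s : N * N) : N * N := (s.2, (2 * s.2 + s.1) mod M)%num.

Definition residues (M : N) (u : nat -> nat) (i : nat) : N * N :=
  (N.of_nat (u i) mod M, N.of_nat (u i.+1) mod M)%num.

Lemma iter_pell_step M u : pell_recurrence u ->
  forall i, iter i (pell_step M) (residues M u 0) = residues M u i.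
Proof.
move=> hu; elim=> [|i IH] //; rewrite iterS IH /pell_step /residues; congr pair.
rewrite hu Nat2N.inj_add Nat2N.inj_mul; change (eqmod M (2 * (N.of_nat (u i.+1) mod M) + N.of_nat (u i) mod M)
  (N.of_nat 2 * N.of_nat (u i.+1) + N.of_nat (u i))).
by apply: eqmod_add; [apply: eqmod_mul; [by [] |] |]; exact: eqmod_mod.
Qed.

(* Modulo 0 nothing is reduced: exact values of P and Q, by evaluation. *)
Definition pellN (i : nat) : N := (iter i (pell_step 0) (0, 1)).1%num.
Definition lucasN (i : nat) : N := (iter i (pell_step 0) (2, 2)).1%num.

Lemma pellN_ok i : pellN i = N.of_nat (pell i).
Proof. by rewrite /pellN (iter_pell_step 0 pell_rec) /= N.mod_0_r. Qed.

Lemma lucasN_ok i : lucasN i = N.of_nat (pell_lucas i).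
Proof. by rewrite /lucasN (iter_pell_step 0 pell_lucas_rec) /= N.mod_0_r. Qed.

(* If P_T = 0 and P_{T-1} = 1 modulo M, every Pell-type sequence is
   T-periodic modulo M (by the addition formula). *)
Lemma pell_periodic u M T : pell_recurrence u -> 0 < T ->
  eqmod M (N.of_nat (pell T)) 0 -> eqmod M (N.of_nat (pell T.-1)) 1 ->
  forall q r, eqmod M (N.of_nat (u (q * T + r))) (N.of_nat (u r)).
Proof.
case: T => [|a] // hu _ h0 h1; elim=> [|q IH] r //.
apply: eqmod_trans (IH r); rewrite mulSn -addnA (pell_shift hu).
rewrite Nat2N.inj_add !Nat2N.inj_mul.
set y1 := N.of_nat (u _.+1); set y0 := N.of_nat (u _).
apply: (eqmod_trans (y := 0 * y1 + 1 * y0)%num); first by apply: eqmod_add; apply: eqmod_mul.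
by rewrite N.mul_0_l N.add_0_l N.mul_1_l.
Qed.

Lemma pow_periodic b M D o : 0 < o -> eqmod M (b ^ N.of_nat (D + o)) (b ^ N.of_nat D) ->
  forall d, D <= d -> exists2 i, i < o & eqmod M (b ^ N.of_nat d) (b ^ N.of_nat (D + i)).
Proof.
move=> ho hp d hd.
have shift q i : eqmod M (b ^ N.of_nat (D + q * o + i)) (b ^ N.of_nat (D + i)).
  elim: q => [|q IH]; first by rewrite mul0n addn0.
  apply: eqmod_trans IH.
  rewrite (_ : D + q.+1 * o + i = (D + o) + (q * o + i)); last by rewrite mulSn; lia.
  rewrite (_ : D + q * o + i = D + (q * o + i)); last lia.
  rewrite (Nat2N.inj_add (D + o)) (Nat2N.inj_add D (q * o + i)) !N.pow_add_r.
  by apply: eqmod_mul.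
exists ((d - D) %% o); first by rewrite ltn_mod.
have := shift ((d - D) %/ o) ((d - D) %% o).
by rewrite -addnA -divn_eq subnKC.
Qed.

Definition pow_residues (b M : N) (D o : nat) : seq N :=
  traject (fun x => (x * b) mod M)%num ((b ^ N.of_nat D) mod M)%num o.

Lemma mem_pow_residues b M D o i : i < o ->
  ((b ^ N.of_nat (D + i)) mod M)%num \in pow_residues b M D o.
Proof.
move=> hi; apply/trajectP; exists i => //; elim: i hi => [|i IH] hi; first by rewrite addn0.
rewrite iterS -IH; last lia.
rewrite addnS Nat2N.inj_succ N.pow_succ_r' N.mul_comm.
by apply: eqmod_mul => //; apply: eqmod_sym; apply: eqmod_mod.
Qed.

Definition pell_step2 (M : N) (s : (N * N) * (N * N)) : (N * N) * (N * N) :=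
  (pell_step M s.1, pell_step M s.2).

Lemma iter_pell_step2 M i sP sQ :
  iter i (pell_step2 M) (sP, sQ) = (iter i (pell_step M) sP, iter i (pell_step M) sQ).
Proof. by elim: i => [|i IH] //; rewrite !iterS IH. Qed.

Definition sieve (M : N) (ws : seq N) (sP sQ : N * N) (T : nat) : bool :=
  all (fun s => all (fun w => s.1.1 mod M != (w + s.2.1) mod M)%num ws)
    (traject (pell_step2 M) (sP, sQ) T).

Lemma sieve_sound M ws sP sQ T : sieve M ws sP sQ T -> forall i w, i < T -> w \in ws ->
  ~ eqmod M (iter i (pell_step M) sP).1 (w + (iter i (pell_step M) sQ).1).
Proof.
move=> /allP hs i w hi hw.
have /hs /allP /(_ w hw) /eqP : iter i (pell_step2 M) (sP, sQ) \in traject (pell_step2 M) (sP, sQ) T.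
  by apply/trajectP; exists i.
by rewrite iter_pell_step2.
Qed.

(* Periods are found by searching a trajectory of this length; the search
   result is re-checked, so the bound only affects completeness. *)
Definition search_bound : nat := 1000.

Definition pell_period (M : N) : nat :=
  (index (1 mod M, 0 mod M)%num (traject (pell_step M) (residues M pell 0) search_bound)).+1.

Definition pow_period (b M : N) (D : nat) : nat :=
  let x := ((b ^ N.of_nat D) mod M)%num in
  (index x (traject (fun y => (y * b) mod M)%num ((x * b) mod M)%num search_bound)).+1.

Definition congruence_ok (m j b D : nat) (M : N) : bool :=
  let T := pell_period M in
  let o := pow_period (N.of_nat b) M D in
  [&& iter T.-1 (pell_step M) (residues M pell 0) == (1 mod M, 0 mod M)%num,
      ((N.of_nat b ^ N.of_nat (D + o)) mod M == (N.of_nat b ^ N.of_nat D) mod M)%num &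
      sieve M [seq (w * pellN m) mod M | w <- pow_residues (N.of_nat b) M D o]%num
        (iter (m + j) (pell_step M) (residues M pell 0)) (residues M pell_lucas 0) T].

(* The congruence argument: with a period T of P modulo M and a period o of
   the powers of b from b^D on, a successful sieve over one period of k and
   one period of d rules out every solution with d >= D. *)
Lemma sieve_excludes m j b D M T o : 0 < T -> 0 < o ->
  iter T.-1 (pell_step M) (residues M pell 0) = (1 mod M, 0 mod M)%num ->
  eqmod M (N.of_nat b ^ N.of_nat (D + o)) (N.of_nat b ^ N.of_nat D) ->
  sieve M [seq (w * pellN m) mod M | w <- pow_residues (N.of_nat b) M D o]%num
    (iter (m + j) (pell_step M) (residues M pell 0)) (residues M pell_lucas 0) T ->
  forall k d, D <= d -> pell (m + k + j) <> b ^ d * pell m + pell_lucas k.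
Proof.
move=> hT0 ho hT hpow hsieve k d hd E.
move: hT; rewrite (iter_pell_step M pell_rec) /residues prednK // => -[h1 h0].
have [i hi hbi] := pow_periodic ho hpow hd.
have := sieve_sound hsieve (ltn_pmod k hT0) (map_f _ (mem_pow_residues _ _ _ hi)).
rewrite -!iterD !(iter_pell_step M) // /residues; cbn [fst]; apply.
have eP : eqmod M (N.of_nat (pell (m + k + j))) (N.of_nat (pell (k %% T + (m + j)))).
  have -> : m + k + j = k %/ T * T + (k %% T + (m + j)) by have := divn_eq k T; lia.
  exact: pell_periodic.
have eQ : eqmod M (N.of_nat (pell_lucas k)) (N.of_nat (pell_lucas (k %% T))).
  by rewrite {1}(divn_eq k T); apply: pell_periodic.
apply: eqmod_trans (eqmod_mod _ _) _; apply: eqmod_trans (eqmod_sym eP) _.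
rewrite E Nat2N.inj_add Nat2N.inj_mul N_of_nat_exp.
apply: eqmod_sym; apply: eqmod_add; last by apply: eqmod_trans (eqmod_mod _ _) (eqmod_sym eQ).
apply: eqmod_trans (eqmod_mod _ _) _.
apply: eqmod_mul; last by rewrite pellN_ok.
by apply: eqmod_trans (eqmod_mod _ _) (eqmod_sym hbi).
Qed.

Lemma congruence_sound m j b D M : congruence_ok m j b D M ->
  forall k d, D <= d -> pell (m + k + j) <> b ^ d * pell m + pell_lucas k.
Proof.
by case/and3P=> /eqP hT /eqP hpow; apply: sieve_excludes hT hpow; apply: ltn0Sn.
Qed.

(* A linear form on the cone 2Y <= X <= 5Y/2, which contains every pair
   (P_{k+1}, P_k) with k >= 1, is controlled by its values 2al+be and 5al+2be
   on the edges (2, 1) and (5, 2) of the cone. *)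
Lemma cone_decomp (al be X Y : Z) :
  (al * X + be * Y = (5 * al + 2 * be) * (X - 2 * Y) + (2 * al + be) * (5 * Y - 2 * X))%Z.
Proof. by ring. Qed.

Lemma cone_pos (al be X Y : Z) : (0 < 2 * al + be)%Z -> (0 < 5 * al + 2 * be)%Z ->
  (2 * Y <= X)%Z -> (2 * X <= 5 * Y)%Z -> (1 <= Y)%Z -> (0 < al * X + be * Y)%Z.
Proof.
by move=> h1 h2 h3 h4 h5; rewrite cone_decomp; nia.
Qed.

Lemma cone_nonneg (al be X Y : Z) : (0 <= 2 * al + be)%Z -> (0 <= 5 * al + 2 * be)%Z ->
  (2 * Y <= X)%Z -> (2 * X <= 5 * Y)%Z -> (0 <= al * X + be * Y)%Z.
Proof.
by move=> h1 h2 h3 h4; rewrite cone_decomp; nia.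
Qed.

Lemma window_facts m j k : 0 < m -> 0 < k ->
  [/\ Z.of_nat (pell (m + k + j)) =
        (zpell (m + j) * zpell k.+1 + zpell (m + j).-1 * zpell k)%Z,
      zlucas k = (2 * zpell k.+1 - 2 * zpell k)%Z,
      (2 * zpell k <= zpell k.+1)%Z, (2 * zpell k.+1 <= 5 * zpell k)%Z & (1 <= zpell k)%Z].
Proof.
move=> hm hk; have := pell_lucasE k; have := pell_double k; have := pell_succ_le hk.
have := pell_gt0 hk; rewrite /zpell /zlucas.
have -> : m + k + j = (m + j).-1.+1 + k by lia.
rewrite (pell_shift pell_rec) prednK; last lia.
move=> *; split; lia.
Qed.

Definition zpellN (n : nat) : Z := Z.of_N (pellN n).

Lemma zpellN_ok n : zpellN n = zpell n.
Proof. by rewrite /zpellN pellN_ok nat_N_Z. Qed.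

(* Upper window test: for k >= 1 and x <= b Q_k, P_{m+k+j} > x P_m + Q_k,
   as (b P_m + 1) Q_k is below P_{m+k+j} on the whole cone. *)
Definition window_upper_ok (m j b : nat) : bool :=
  let c := (Z.of_nat b * zpellN m + 1)%Z in
  let al := (zpellN (m + j) - 2 * c)%Z in let be := (zpellN (m + j).-1 + 2 * c)%Z in
  (0 <? 2 * al + be)%Z && (0 <? 5 * al + 2 * be)%Z.

(* Lower window test: for k >= 1 and x > Q_k, P_{m+k+j} < x P_m + Q_k,
   as (P_m + 1) Q_k is above P_{m+k+j} on the whole cone. *)
Definition window_lower_ok (m j : nat) : bool :=
  let c := (zpellN m + 1)%Z in
  let al := (2 * c - zpellN (m + j))%Z in let be := (- 2 * c - zpellN (m + j).-1)%Z in
  (0 <=? 2 * al + be)%Z && (0 <=? 5 * al + 2 * be)%Z.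

Lemma window_upper_sound m j b : window_upper_ok m j b -> 0 < m -> forall k x, 0 < k ->
  x <= b * pell_lucas k -> pell (m + k + j) <> x * pell m + pell_lucas k.
Proof.
move=> /andP [/Z.ltb_lt h1 /Z.ltb_lt h2] hm k x hk hx E.
have [eP eQ e1 e2 e3] := window_facts j hm hk; rewrite !zpellN_ok in h1 h2.
have := cone_pos h1 h2 e1 e2 e3.
have : x * pell m <= (b * pell_lucas k) * pell m by apply: leq_mul.
move: eP eQ; rewrite /zpell /zlucas E; nia.
Qed.

Lemma window_lower_sound m j : window_lower_ok m j -> 0 < m -> forall k x, 0 < k ->
  pell_lucas k < x -> pell (m + k + j) <> x * pell m + pell_lucas k.
Proof.
move=> /andP [/Z.leb_le h1 /Z.leb_le h2] hm k x hk hx E.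
have [eP eQ e1 e2 e3] := window_facts j hm hk; rewrite !zpellN_ok in h1 h2.
have := cone_nonneg h1 h2 e1 e2.
have : (pell_lucas k).+1 * pell m <= x * pell m by apply: leq_mul.
have := pell_gt0 hm.
move: eP eQ; rewrite /zpell /zlucas E; nia.
Qed.

(* The solutions, as tuples (b, n, m, k). *)
Definition solutions : seq (nat * nat * nat * nat) :=
  [:: (3, 3, 1, 0); (3, 3, 1, 1); (5, 4, 2, 0); (5, 4, 2, 1);
      (10, 4, 1, 0); (10, 4, 1, 1); (6, 6, 1, 4)].

Definition finite_ok (m j b K D : nat) : bool :=
  let bN := N.of_nat b in
  all (fun k => all (fun d =>
      ~~ [&& (bN ^ N.of_nat d.-1 <=? lucasN k)%num, (lucasN k <? bN ^ N.of_nat d)%num &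
             (pellN (m + k + j) =? bN ^ N.of_nat d * pellN m + lucasN k)%num]
      || ((b, m + k + j, m, k) \in solutions)) (iota 1 D.-1)) (iota 0 K).

Lemma finite_sound m j b K D : finite_ok m j b K D -> forall k d, k < K -> 0 < d < D ->
  b ^ d.-1 <= pell_lucas k < b ^ d -> pell (m + k + j) = b ^ d * pell m + pell_lucas k ->
  (b, m + k + j, m, k) \in solutions.
Proof.
move=> hfin k d hk /andP [hd1 hd2] /andP [h1 h2] E.
have := allP hfin k; rewrite mem_iota => /(_ ltac:(lia)) /allP /(_ d).
rewrite mem_iota => /(_ ltac:(lia)) /orP [] // /negP []; apply/and3P; split.
- by apply/N.leb_le; rewrite lucasN_ok -N_of_nat_exp; lia.
- by apply/N.ltb_lt; rewrite lucasN_ok -N_of_nat_exp; lia.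
- by apply/N.eqb_eq; rewrite !pellN_ok lucasN_ok -N_of_nat_exp E; lia.
Qed.

(* Certificate by the window inequalities: only k = 0 (hence d <= 2) remains. *)
Definition window_ok (m j b : nat) : bool :=
  (window_upper_ok m j b || window_lower_ok m j) && finite_ok m j b 1 3.

(* Certificate by a congruence modulo M: exponents d >= D are excluded, and
   b^(D-1) <= Q_6 leaves only k < 6 for the smaller exponents. *)
Definition congruence_cert_ok (m j b D : nat) (M : N) : bool :=
  [&& congruence_ok m j b D M, (N.of_nat b ^ N.of_nat D.-1 <=? lucasN 6)%num,
      0 < D & finite_ok m j b 6 D].

(* Congruence certificates (m, j, b, D, M); every other case (m, j, b) with
   m <= 7, j <= 4, 2 <= b <= 10 is settled by the window inequalities. *)
Definition certificates : seq (nat * nat * nat * nat * nat) := [::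
  (1, 1, 2, 1, 6); (1, 1, 3, 3, 135); (1, 1, 4, 1, 12); (1, 1, 5, 1, 15); (1, 1, 6, 3, 1080);
  (1, 1, 7, 1, 21); (1, 1, 8, 1, 24); (1, 1, 9, 1, 657); (1, 1, 10, 1, 30);
  (1, 2, 4, 2, 48); (1, 2, 5, 2, 775); (1, 2, 6, 1, 6); (1, 2, 7, 2, 3185); (1, 2, 8, 1, 56);
  (1, 2, 9, 1, 45); (1, 2, 10, 2, 1100);
  (2, 1, 2, 3, 120); (2, 1, 3, 2, 45); (2, 1, 4, 1, 20); (2, 1, 5, 2, 775); (2, 1, 6, 1, 6);
  (2, 1, 7, 2, 3185); (2, 1, 8, 1, 56); (2, 1, 9, 1, 45); (2, 1, 10, 1, 110);
  (2, 2, 6, 1, 6); (2, 2, 7, 2, 3185); (2, 2, 8, 1, 56); (2, 2, 9, 1, 63); (2, 2, 10, 1, 410);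
  (3, 1, 3, 2, 45); (3, 1, 4, 2, 48); (3, 1, 5, 2, 775); (3, 1, 6, 1, 6); (3, 1, 7, 1, 35);
  (3, 1, 8, 1, 56); (3, 1, 9, 1, 45); (3, 1, 10, 1, 110);
  (3, 2, 6, 1, 6); (3, 2, 7, 1, 35); (3, 2, 8, 1, 40); (3, 2, 9, 1, 45); (3, 2, 10, 1, 10);
  (4, 0, 2, 1, 6); (4, 0, 3, 1, 39); (4, 0, 4, 1, 12); (4, 0, 5, 1, 155); (4, 0, 6, 1, 6);
  (4, 0, 7, 1, 301); (4, 0, 8, 1, 24); (4, 0, 9, 1, 765); (4, 0, 10, 1, 30);
  (4, 1, 3, 1, 39); (4, 1, 4, 1, 12); (4, 1, 5, 1, 5); (4, 1, 6, 1, 6); (4, 1, 7, 1, 21);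
  (4, 1, 8, 1, 24); (4, 1, 9, 1, 765); (4, 1, 10, 1, 10);
  (4, 2, 6, 2, 36); (4, 2, 7, 1, 7); (4, 2, 8, 1, 24); (4, 2, 9, 1, 99); (4, 2, 10, 1, 10);
  (5, 0, 2, 2, 68); (5, 0, 3, 1, 123); (5, 0, 4, 2, 48); (5, 0, 5, 1, 5); (5, 0, 6, 1, 6);
  (5, 0, 7, 1, 203); (5, 0, 8, 1, 56); (5, 0, 9, 1, 45); (5, 0, 10, 1, 10);
  (5, 1, 3, 2, 99); (5, 1, 4, 2, 48); (5, 1, 5, 1, 5); (5, 1, 6, 1, 30); (5, 1, 7, 1, 7);
  (5, 1, 8, 1, 56); (5, 1, 9, 1, 45); (5, 1, 10, 1, 10);
  (5, 2, 6, 2, 180); (5, 2, 7, 1, 399); (5, 2, 8, 1, 24); (5, 2, 9, 1, 45); (5, 2, 10, 1, 10);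
  (6, 0, 2, 1, 14); (6, 0, 3, 1, 15); (6, 0, 4, 1, 20); (6, 0, 5, 1, 5); (6, 0, 6, 1, 30);
  (6, 0, 7, 1, 7); (6, 0, 8, 1, 56); (6, 0, 9, 1, 45); (6, 0, 10, 1, 10);
  (6, 1, 3, 1, 15); (6, 1, 4, 1, 12); (6, 1, 5, 1, 5); (6, 1, 6, 1, 30); (6, 1, 7, 1, 35);
  (6, 1, 8, 1, 24); (6, 1, 9, 1, 45); (6, 1, 10, 1, 10);
  (6, 2, 6, 1, 6); (6, 2, 7, 1, 35); (6, 2, 8, 1, 40); (6, 2, 9, 1, 45); (6, 2, 10, 1, 10);
  (7, 0, 2, 2, 12); (7, 0, 3, 1, 105); (7, 0, 4, 1, 12); (7, 0, 5, 1, 5); (7, 0, 6, 2, 180);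
  (7, 0, 7, 1, 203); (7, 0, 8, 1, 24); (7, 0, 9, 1, 45); (7, 0, 10, 1, 10);
  (7, 1, 3, 1, 39); (7, 1, 4, 1, 52); (7, 1, 5, 1, 5); (7, 1, 6, 1, 6); (7, 1, 7, 1, 91);
  (7, 1, 8, 1, 584); (7, 1, 9, 1, 63); (7, 1, 10, 1, 10);
  (7, 2, 6, 2, 180); (7, 2, 7, 1, 399); (7, 2, 8, 1, 24); (7, 2, 9, 1, 63); (7, 2, 10, 1, 330)].

Lemma certificates_ok :
  all (fun c => let: (m, j, b, D, M) := c in congruence_cert_ok m j b D (N.of_nat M)) certificates.
Proof. by vm_compute. Qed.

Lemma all_cases_covered :
  all (fun m => all (fun j => all (fun b => window_ok m j b ||
         has (fun c => let: (m', j', b', _, _) := c in [&& m' == m, j' == j & b' == b]) certificates)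
       (iota 2 9)) (iota 0 5)) (iota 1 7).
Proof. by vm_compute. Qed.

Lemma case_sound m j b : 0 < m -> 1 < b ->
  window_ok m j b \/ (exists D M, congruence_cert_ok m j b D M) -> forall k d, 0 < d ->
  b ^ d.-1 <= pell_lucas k < b ^ d -> pell (m + k + j) = b ^ d * pell m + pell_lucas k ->
  (b, m + k + j, m, k) \in solutions.
Proof.
move=> hm hb hcase k d hd /andP [h1 h2] E.
have hbd : b ^ d = b * b ^ d.-1 by rewrite -expnS prednK.
case: hcase => [/andP [hwin hfin] | [D [M /and4P [hcong /N.leb_le hQ6 hD hfin]]]].
- case: (posnP k) => hk.
    have hd3 : d < 3.
      rewrite ltnNge; apply/negP => hd3.
      have : b ^ 2 <= b ^ d.-1 by apply: leq_pexp2l; lia.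
      have : 2 ^ 2 <= b ^ 2 by rewrite leq_exp2r.
      by move: h1; rewrite hk; change (pell_lucas 0) with 2; lia.
    by apply: (finite_sound hfin) E; [rewrite hk | rewrite hd hd3 | rewrite h1 h2].
  case/orP: hwin => [hup | hlow]; exfalso.
    by apply: (window_upper_sound hup hm hk _ E); rewrite hbd leq_mul.
  exact: (window_lower_sound hlow hm hk h2 E).
- have [hdD|hdD] := leqP D d; first by case: (congruence_sound hcong hdD E).
  apply: (finite_sound hfin) E; [|by rewrite hd hdD|by rewrite h1 h2].
  rewrite ltnNge; apply/negP => hk6.
  have : pell_lucas 6 <= pell_lucas k by apply: pell_lucas_mono.
  have : b ^ d <= b ^ D.-1 by apply: leq_pexp2l; lia.
  move: hQ6; rewrite lucasN_ok -N_of_nat_exp; lia.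
Qed.

Lemma small_m_solutions m j b k d : 0 < m <= 7 -> j <= 4 -> 2 <= b <= 10 -> 0 < d ->
  b ^ d.-1 <= pell_lucas k < b ^ d -> pell (m + k + j) = b ^ d * pell m + pell_lucas k ->
  (b, m + k + j, m, k) \in solutions.
Proof.
move=> /andP [hm1 hm7] hj /andP [hb2 hb10]; apply: case_sound => //.
have := allP all_cases_covered m; rewrite mem_iota => /(_ ltac:(lia)) /allP /(_ j).
rewrite mem_iota => /(_ ltac:(lia)) /allP /(_ b); rewrite mem_iota => /(_ ltac:(lia)).
case/orP => [|/hasP [[[[[m' j'] b'] D] M] hc /and3P [/eqP em /eqP ej /eqP eb]]]; first by left.
right; exists D, (N.of_nat M); subst m' j' b'.
exact: (allP certificates_ok _ hc).
Qed.

Lemma mem_solutions b n m k : (b, n, m, k) \in solutions <->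
     (b = 3 /\ n = 3 /\ m = 1 /\ k = 0) \/
     (b = 3 /\ n = 3 /\ m = 1 /\ k = 1) \/
     (b = 5 /\ n = 4 /\ m = 2 /\ k = 0) \/
     (b = 5 /\ n = 4 /\ m = 2 /\ k = 1) \/
     (b = 10 /\ n = 4 /\ m = 1 /\ k = 0) \/
     (b = 10 /\ n = 4 /\ m = 1 /\ k = 1) \/
     (b = 6 /\ n = 6 /\ m = 1 /\ k = 4).
Proof.
rewrite !inE; split.
- by do 6?[case/orP=> [/eqP[-> -> -> ->]|]]; [tauto..|move/eqP=> [-> -> -> ->]; tauto].
- by do 6?[case=> [[-> [-> [-> ->]]]|]]; [..|move=> [-> [-> [-> ->]]]]; rewrite eqxx ?orbT.
Qed.

Lemma solutions_ok :
  all (fun s => let: (b, n, m, k) := s in pell n == b ^ ndigits b (pell_lucas k) * pell m + pell_lucas k)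
    solutions.
Proof. by vm_compute. Qed.

Lemma ndigits_bounds b N : 1 < b -> 0 < N -> b ^ (ndigits b N).-1 <= N < b ^ ndigits b N.
Proof. exact: trunc_log_bounds. Qed.

Theorem theorem3 (b n m k : nat) :
  2 <= b <= 10 -> 1 <= m ->
  (pell n = b ^ ndigits b (pell_lucas k) * pell m + pell_lucas k <->
     (b = 3 /\ n = 3 /\ m = 1 /\ k = 0) \/
     (b = 3 /\ n = 3 /\ m = 1 /\ k = 1) \/
     (b = 5 /\ n = 4 /\ m = 2 /\ k = 0) \/
     (b = 5 /\ n = 4 /\ m = 2 /\ k = 1) \/
     (b = 10 /\ n = 4 /\ m = 1 /\ k = 0) \/
     (b = 10 /\ n = 4 /\ m = 1 /\ k = 1) \/
     (b = 6 /\ n = 6 /\ m = 1 /\ k = 4)).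
Proof.
move=> /andP [hb2 hb10] hm; rewrite -mem_solutions; split => [E|hs]; last first.
  by apply/eqP; apply: (allP solutions_ok _ hs).
set d := ndigits b (pell_lucas k) in E.
have /andP [hlo hhi] := ndigits_bounds hb2 (pell_lucas_gt0 k).
have hwin : pell_lucas k < b ^ d <= 10 * pell_lucas k.
  by apply/andP; split=> //; rewrite -(prednK (ltn0Sn _ : 0 < d)) expnS leq_mul.
have /andP [hn1 hn2] := index_window hm hwin E.
have [j hj hn] : exists2 j, j <= 4 & n = m + k + j by exists (n - (m + k)); lia.
subst n.
have hm7 : m <= 7.
  rewrite leqNgt; apply/negP => hm8; apply: (@large_m_no_divisibility m k j hm8 hj).
  by exists (Z.of_nat (b ^ d)); rewrite /zpell /zlucas E; lia.
by apply: (small_m_solutions _ hj _ _ _ E); rewrite ?hm ?hm7 ?hb2 ?hb10 ?hlo ?hhi.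
Qed.
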